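(* Consider an $L$-layer graph convolutional network on a graph with vertex set $\mathcal V$ and fixed weights $W=(W^{(0)},\dots,W^{(L-1)})$, whose exact activations are $H^{(0)}=X$, $Z^{(l+1)}=PH^{(l)}W^{(l)}$, $H^{(l+1)}=\sigma(Z^{(l+1)})$. Run the control-variate (CV) forward procedure described in the context with the constant weight sequence $W_i=W$ for all iterations $i$, with arbitrary initial historical activations and arbitrary sample sizes $D^{(l)}\ge 1$. Then for every iteration $i>LI$ (i.e. after $L$ full epochs), the activations computed by CV are exact: for each $l\in\{1,\dots,L\}$ and every node $u$ whose $z^{(l)}_u$ is computed at iteration $i$ we have $z^{(l)}_{CV,i,u}=z^{(l)}_u$ (the $u$-th row of $Z^{(l)}$), and for each $l\in\{0,\dots,L-1\}$ and every node $u$ whose $h^{(l)}_u$ is computed at iteration $i$ we have $h^{(l)}_{CV,i,u}=h^{(l)}_u$; i.e. $Z^{(l)}_{CV,i}=Z^{(l)}$ and $H^{(l)}_{CV,i}=H^{(l)}$. This holds for every realization of the random minibatches and neighbor samples.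
   Context: Graph: undirected $\mathcal G=(\mathcal V,\mathcal E)$ with $V=|\mathcal V|$, adjacency matrix $A$, $\tilde A=A+I$, $\tilde D$ diagonal with $\tilde D_{uu}=\sum_v\tilde A_{uv}$, and propagation matrix $P=\tilde D^{-1/2}\tilde A\tilde D^{-1/2}$. $\mathbf n(u)$ is the neighbor set of $u$ (the $v$ with $P_{uv}\ne0$), $n(u)=|\mathbf n(u)|$. $X$ is the input feature matrix, $\sigma$ an activation function applied elementwise; rows of $H^{(l)}$, $Z^{(l)}$ are $h^{(l)}_v$, $z^{(l)}_v$. CV procedure: For each layer $l\in\{0,\dots,L-1\}$ a historical activation $\bar h^{(l)}_v$ is stored for every $v\in\mathcal V$ (initialized arbitrarily). The algorithm runs in epochs; in each epoch $\mathcal V$ (all vertices) is randomly partitioned into $I$ minibatches $\mathcal V_1,\dots,\mathcal V_I$, and iteration $i$ processes one minibatch $\mathcal V_i$ with weights $W_i$. At iteration $i$: set $\mathbf r^{(L)}=\mathcal V_i$; for $l=L-1,\dots,0$, for each $u\in\mathbf r^{(l+1)}$ draw a uniformly random subset $\hat{\mathbf n}^{(l)}(u)\subseteq\mathbf n(u)$ of size $\min(D^{(l)},n(u))$ without replacement, and let $\mathbf r^{(l)}=\mathbf r^{(l+1)}\cup\bigcup_{u\in\mathbf r^{(l+1)}}\hat{\mathbf n}^{(l)}(u)$. Define $\hat P^{(l)}_{uv}=\frac{n(u)}{D^{(l)}}P_{uv}$ if $v\in\hat{\mathbf n}^{(l)}(u)$ and $0$ otherwise. Forward pass: $h^{(0)}_{CV,i,v}=x_v$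 for $v\in\mathbf r^{(0)}$, and for $l=0,\dots,L-1$ and $u\in\mathbf r^{(l+1)}$, $$z^{(l+1)}_{CV,i,u}=\Big(\sum_{v\in\hat{\mathbf n}^{(l)}(u)}\hat P^{(l)}_{uv}\big(h^{(l)}_{CV,i,v}-\bar h^{(l)}_v\big)+\sum_{v\in\mathbf n(u)}P_{uv}\bar h^{(l)}_v\Big)W_i^{(l)},\quad h^{(l+1)}_{CV,i,u}=\sigma(z^{(l+1)}_{CV,i,u}),$$ using the histories stored before iteration $i$ (in matrix form $Z^{(l+1)}=(\hat P^{(l)}(H^{(l)}-\bar H^{(l)})+P\bar H^{(l)})W^{(l)}$). After the forward (and optional backward) pass, set $\bar h^{(l)}_v\leftarrow h^{(l)}_{CV,i,v}$ for every $l\in\{0,\dots,L-1\}$ and every $v\in\mathbf r^{(l)}$. *)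

(* Values in a real closed field R (needed for the square
   roots in D^{-1/2}); the result is stated for every rcfType R. *)
From HB Require Import structures.
From mathcomp Require Import all_boot all_order all_algebra.
Set Implicit Arguments. Unset Strict Implicit. Unset Printing Implicit Defensive.
Import Order.TTheory GRing.Theory Num.Theory.
Local Open Scope ring_scope.

Definition Atil (R : rcfType) (V : finType) (adj : rel V) (u v : V) : R :=
  (adj u v)%:R + (u == v)%:R.
Definition Dtil (R : rcfType) (V : finType) (adj : rel V) (u : V) : R :=
  \sum_v Atil R adj u v.
Definition Pmat (R : rcfType) (V : finType) (adj : rel V) (u v : V) : R :=
  (Num.sqrt (Dtil R adj u))^-1 * Atil R adj u v * (Num.sqrt (Dtil R adj v))^-1.
Definition nbr (R : rcfType) (V : finType) (adj : rel V) (u : V) : {set V} :=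
  [set v | Pmat R adj u v != 0].

Definition agg (R : rcfType) (V : finType) (adj : rel V) (d : nat -> nat)
  (W : forall l, 'M[R]_(d l, d l.+1)) (l : nat) (H : V -> 'rV[R]_(d l)) (u : V)
  : 'rV[R]_(d l.+1) :=
  (\sum_v Pmat R adj u v *: H v) *m W l.

Fixpoint Hex (R : rcfType) (V : finType) (adj : rel V) (d : nat -> nat)
  (X : V -> 'rV[R]_(d 0)) (W : forall l, 'M[R]_(d l, d l.+1)) (sigma : R -> R)
  (l : nat) : V -> 'rV[R]_(d l) :=
  match l return V -> 'rV[R]_(d l) with
  | 0 => X
  | l'.+1 => fun u => map_mx sigma (agg adj W (Hex adj X W sigma l') u)
  end.

(* z^{(l)}_u for l >= 1 (junk value 0 for l = 0) *)
Definition Zex (R : rcfType) (V : finType) (adj : rel V) (d : nat -> nat)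
  (X : V -> 'rV[R]_(d 0)) (W : forall l, 'M[R]_(d l, d l.+1)) (sigma : R -> R)
  (l : nat) : V -> 'rV[R]_(d l) :=
  match l return V -> 'rV[R]_(d l) with
  | 0 => fun _ => 0
  | l'.+1 => agg adj W (Hex adj X W sigma l')
  end.

(* Iterations are numbered i = 1, 2, ...; iteration i belongs to epoch
   (i-1) %/ I and processes minibatch number (i-1) %% I of that epoch.
   mb k : V -> 'I_I is the partition of V chosen in epoch k (vertex v is in
   minibatch j of epoch k iff mb k v = j). *)
Definition batch (V : finType) (I : nat) (mb : nat -> V -> 'I_I) (i : nat)
  : {set V} :=
  [set v | val (mb (i.-1 %/ I)%N v) == (i.-1 %% I)%N].

(* rfk i k = r^{(L-k)} at iteration i; samp i l u = hat n^{(l)}(u) at iteration i *)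
Fixpoint rfk (V : finType) (I : nat) (mb : nat -> V -> 'I_I)
  (samp : nat -> nat -> V -> {set V}) (L i k : nat) : {set V} :=
  match k with
  | 0 => batch mb i
  | k'.+1 =>
      let S := rfk mb samp L i k' in
      S :|: \bigcup_(u in S) samp i (L - k'.+1)%N u
  end.

Definition rf (V : finType) (I : nat) (mb : nat -> V -> 'I_I)
  (samp : nat -> nat -> V -> {set V}) (L i l : nat) : {set V} :=
  rfk mb samp L i (L - l).

Definition Phat (R : rcfType) (V : finType) (adj : rel V)
  (Dl : nat -> nat) (samp : nat -> nat -> V -> {set V}) (i l : nat) (u v : V) : R :=
  if v \in samp i l u
  then ((#|nbr R adj u|)%:R / (Dl l)%:R) * Pmat R adj u v
  else 0.

Definition cv_step (R : rcfType) (V : finType) (adj : rel V) (d : nat -> nat)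
  (W : forall l, 'M[R]_(d l, d l.+1)) (Dl : nat -> nat)
  (samp : nat -> nat -> V -> {set V}) (i l : nat)
  (hbar h : V -> 'rV[R]_(d l)) (u : V) : 'rV[R]_(d l.+1) :=
  ((\sum_(v in samp i l u) Phat R adj Dl samp i l u v *: (h v - hbar v))
   + \sum_(v in nbr R adj u) Pmat R adj u v *: hbar v) *m W l.

Fixpoint cvH (R : rcfType) (V : finType) (adj : rel V) (d : nat -> nat)
  (X : V -> 'rV[R]_(d 0)) (W : forall l, 'M[R]_(d l, d l.+1)) (sigma : R -> R)
  (Dl : nat -> nat) (samp : nat -> nat -> V -> {set V})
  (hbar : forall l, V -> 'rV[R]_(d l)) (i l : nat) : V -> 'rV[R]_(d l) :=
  match l return V -> 'rV[R]_(d l) with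
  | 0 => X
  | l'.+1 => fun u =>
      map_mx sigma (cv_step adj W Dl samp i (hbar l')
                      (cvH adj X W sigma Dl samp hbar i l') u)
  end.

(* z^{(l)}_{CV,i,.} for l >= 1 (junk 0 for l = 0) *)
Definition cvZ (R : rcfType) (V : finType) (adj : rel V) (d : nat -> nat)
  (X : V -> 'rV[R]_(d 0)) (W : forall l, 'M[R]_(d l, d l.+1)) (sigma : R -> R)
  (Dl : nat -> nat) (samp : nat -> nat -> V -> {set V})
  (hbar : forall l, V -> 'rV[R]_(d l)) (i l : nat) : V -> 'rV[R]_(d l) :=
  match l return V -> 'rV[R]_(d l) with
  | 0 => fun _ => 0
  | l'.+1 => cv_step adj W Dl samp i (hbar l')
               (cvH adj X W sigma Dl samp hbar i l')
  end.

(* hist i = historical activations after iteration i (hist 0 = init).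
   Iteration i uses hist (i-1) and then overwrites layers l < L at v in r^{(l)}. *)
Fixpoint hist (R : rcfType) (V : finType) (adj : rel V) (d : nat -> nat)
  (X : V -> 'rV[R]_(d 0)) (W : forall l, 'M[R]_(d l, d l.+1)) (sigma : R -> R)
  (L I : nat) (mb : nat -> V -> 'I_I) (Dl : nat -> nat)
  (samp : nat -> nat -> V -> {set V}) (init : forall l, V -> 'rV[R]_(d l))
  (i : nat) : forall l, V -> 'rV[R]_(d l) :=
  match i with
  | 0 => init
  | i'.+1 =>
      let hb := hist adj X W sigma L mb Dl samp init i' in
      fun l v =>
        if (l < L)%N && (v \in rf mb samp L i'.+1 l)
        then cvH adj X W sigma Dl samp hb i'.+1 l v
        else hb l v
  end.

Definition HCV (R : rcfType) (V : finType) (adj : rel V) (d : nat -> nat)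
  (X : V -> 'rV[R]_(d 0)) (W : forall l, 'M[R]_(d l, d l.+1)) (sigma : R -> R)
  (L I : nat) (mb : nat -> V -> 'I_I) (Dl : nat -> nat)
  (samp : nat -> nat -> V -> {set V}) (init : forall l, V -> 'rV[R]_(d l))
  (i l : nat) : V -> 'rV[R]_(d l) :=
  cvH adj X W sigma Dl samp (hist adj X W sigma L mb Dl samp init i.-1) i l.

Definition ZCV (R : rcfType) (V : finType) (adj : rel V) (d : nat -> nat)
  (X : V -> 'rV[R]_(d 0)) (W : forall l, 'M[R]_(d l, d l.+1)) (sigma : R -> R)
  (L I : nat) (mb : nat -> V -> 'I_I) (Dl : nat -> nat)
  (samp : nat -> nat -> V -> {set V}) (init : forall l, V -> 'rV[R]_(d l))
  (i l : nat) : V -> 'rV[R]_(d l) :=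
  cvZ adj X W sigma Dl samp (hist adj X W sigma L mb Dl samp init i.-1) i l.

(* Once the stored history of layer l agrees with the exact activations H^(l)
   at every vertex, the control-variate term sum_v P^_uv (h_v - hbar_v) vanishes
   on the vertices whose layer-l activation is itself exact, and the remaining
   term sum_v P_uv hbar_v is the exact aggregation (P H^(l) W^(l))_u.  Since
   sampled neighbours of r^(l+1) lie in r^(l), induction on the layers shows
   that an iteration whose histories are all exact computes exact activations.
   In epoch l every vertex v lies in some minibatch, hence in r^(l), so its
   layer-l history is overwritten at iteration l I + mb_l(v) + 1 by a value
   computed from histories of layers below l, which are exact by then; it is
   exact from that iteration on.  After L epochs all histories are exact.
   Neither the sample sizes nor the inclusion of the samples in the
   neighbourhoods play any role. *)
From HB Require Import structures.
From mathcomp Require Import all_boot all_order all_algebra.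
From mathcomp Require Import zify.
Set Implicit Arguments. Unset Strict Implicit. Unset Printing Implicit Defensive.
Import Order.TTheory GRing.Theory Num.Theory.
Local Open Scope ring_scope.

Section ControlVariateExactness.

Variables (R : rcfType) (V : finType) (adj : rel V) (d : nat -> nat).
Variables (X : V -> 'rV[R]_(d 0)) (W : forall l, 'M[R]_(d l, d l.+1)).
Variables (sigma : R -> R) (L I : nat) (mb : nat -> V -> 'I_I).
Variables (Dl : nat -> nat) (samp : nat -> nat -> V -> {set V}).
Variable init : forall l, V -> 'rV[R]_(d l).

Local Notation Hx := (Hex adj X W sigma).
Local Notation r := (rf mb samp L).

Lemma batch_sub_rf i l : batch mb i \subset r i l.
Proof.
rewrite /rf; elim: (L - l)%N => [|k IH] //=.
exact: subset_trans IH (subsetUl _ _).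
Qed.

Lemma samp_sub_rf i l u : (l < L)%N -> u \in r i l.+1 -> samp i l u \subset r i l.
Proof.
move=> lt_lL ru; rewrite /rf (_ : (L - l = (L - l.+1).+1)%N) /=; last by lia.
rewrite (_ : (L - (L - l.+1).+1 = l)%N); last by lia.
by apply: subset_trans (subsetUr _ _); apply: bigcup_sup.
Qed.

Lemma sum_nbr_Pmat k (H : V -> 'rV[R]_k) u :
  \sum_(v in nbr R adj u) Pmat R adj u v *: H v = \sum_v Pmat R adj u v *: H v.
Proof.
rewrite [RHS](bigID [in nbr R adj u]) /= [X in _ = _ + X]big1 ?addr0 // => v.
by rewrite inE negbK => /eqP ->; rewrite scale0r.
Qed.

Lemma cv_step_exact i l (hbar h H : V -> 'rV[R]_(d l)) u :
  hbar =1 H -> {in samp i l u, h =1 H} ->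
  cv_step adj W Dl samp i hbar h u = agg adj W H u.
Proof.
move=> hbarE hE; rewrite /cv_step /agg big1 ?add0r; last first.
  by move=> v /hE ->; rewrite hbarE subrr scaler0.
by rewrite sum_nbr_Pmat; congr (_ *m _); apply: eq_bigr => v _; rewrite hbarE.
Qed.

Definition exact_below (hb : forall l, V -> 'rV[R]_(d l)) l :=
  forall l', (l' < l)%N -> hb l' =1 Hx l'.

Lemma exact_belowW hb l l' : (l' <= l)%N -> exact_below hb l -> exact_below hb l'.
Proof. by move=> le_l'l hbE k lt_k; apply: hbE (leq_trans lt_k le_l'l). Qed.

Lemma cvZ_exact_step hb i l : (l < L)%N -> exact_below hb l.+1 ->
  {in r i l, cvH adj X W sigma Dl samp hb i l =1 Hx l} ->
  {in r i l.+1, cvZ adj X W sigma Dl samp hb i l.+1 =1 Zex adj X W sigma l.+1}.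
Proof.
move=> lt_lL hbE cvHE u ru; apply: cv_step_exact; first exact: hbE.
by move=> v /(subsetP (samp_sub_rf lt_lL ru)); apply: cvHE.
Qed.

Lemma cvH_exact hb i l : (l <= L)%N -> exact_below hb l ->
  {in r i l, cvH adj X W sigma Dl samp hb i l =1 Hx l}.
Proof.
elim: l => [|l IH] le_lL hbE u ru //=.
congr (map_mx sigma _); apply: (cvZ_exact_step le_lL hbE) ru.
by apply: (IH (ltnW le_lL)); apply: exact_belowW hbE.
Qed.

Lemma cvZ_exact hb i l : (0 < l <= L)%N -> exact_below hb l ->
  {in r i l, cvZ adj X W sigma Dl samp hb i l =1 Zex adj X W sigma l}.
Proof.
case: l => [|l] //= le_lL hbE; apply: (cvZ_exact_step le_lL hbE).
by apply: (cvH_exact (ltnW le_lL)); apply: exact_belowW hbE.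
Qed.

Definition visit l v := (l * I + mb l v).+1.

Lemma mem_batch_visit l v : v \in batch mb (visit l v).
Proof.
have I_gt0 : (0 < I)%N := leq_ltn_trans (leq0n _) (ltn_ord (mb l v)).
rewrite inE /visit /= divnMDl // modnMDl divn_small // modn_small //.
by rewrite addn0.
Qed.

Lemma visit_le_epoch l' l v : (l' < l)%N -> (visit l' v <= l * I)%N.
Proof.
move=> lt_l'l; have := ltn_ord (mb l' v).
have : (l'.+1 * I <= l * I)%N by rewrite leq_mul2r lt_l'l orbT.
by rewrite /visit; lia.
Qed.

Local Notation histories := (hist adj X W sigma L mb Dl samp init).

Lemma hist_exact_after_visit j l v : (l < L)%N -> (visit l v <= j)%N ->
  histories j l v = Hx l v.
Proof.
elim: j l v => [|j IH] l v lt_lL //= le_vj; rewrite lt_lL /=.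
case: ifP => [rv | nrv].
  apply: (cvH_exact (ltnW lt_lL)) rv => l' lt_l'l w.
  apply: (IH _ _ (ltn_trans lt_l'l lt_lL)).
  by have := visit_le_epoch w lt_l'l; move: le_vj; rewrite /visit; lia.
move: le_vj; rewrite leq_eqVlt => /orP[/eqP visit_j | ]; last exact: IH.
by rewrite -visit_j (subsetP (batch_sub_rf _ _) _ (mem_batch_visit l v)) in nrv.
Qed.

Lemma hist_exact_after_epochs j : (L * I <= j)%N -> exact_below (histories j) L.
Proof.
move=> le_j l lt_lL v; apply: (hist_exact_after_visit lt_lL).
exact: leq_trans (visit_le_epoch v lt_lL) le_j.
Qed.

End ControlVariateExactness.

Theorem theorem1 (R : rcfType) (V : finType) (adj : rel V)
  (adj_sym : symmetric adj)
  (d : nat -> nat) (X : V -> 'rV[R]_(d 0))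
  (W : forall l, 'M[R]_(d l, d l.+1)) (sigma : R -> R)
  (L I : nat) (mb : nat -> V -> 'I_I) (Dl : nat -> nat)
  (samp : nat -> nat -> V -> {set V}) (init : forall l, V -> 'rV[R]_(d l))
  (Dl_pos : forall l, (l < L)%N -> (0 < Dl l)%N)
  (samp_sub : forall i l u, (l < L)%N -> samp i l u \subset nbr R adj u)
  (samp_card : forall i l u, (l < L)%N ->
                 #|samp i l u| = minn (Dl l) #|nbr R adj u|) :
  forall i : nat, (L * I < i)%N ->
    (forall l : nat, (1 <= l <= L)%N -> forall u, u \in rf mb samp L i l ->
       ZCV adj X W sigma L mb Dl samp init i l u = Zex adj X W sigma l u)
    /\
    (forall l : nat, (l < L)%N -> forall u, u \in rf mb samp L i l ->
       HCV adj X W sigma L mb Dl samp init i l u = Hex adj X W sigma l u).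
Proof.
move=> i lt_LIi.
have hbE : exact_below adj X W sigma (hist adj X W sigma L mb Dl samp init i.-1) L.
  by apply: hist_exact_after_epochs; lia.
split=> l.
  move=> l_range u ru; apply: (cvZ_exact Dl l_range _ ru).
  by apply: exact_belowW hbE; case/andP: l_range.
move=> lt_lL u ru; apply: (cvH_exact Dl (ltnW lt_lL) _ ru).
exact: exact_belowW (ltnW lt_lL) hbE.
Qed.
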